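(* Let $X$ be a compact metric space and $f:X\dashrightarrow X$ a continuous open-dense defined map which is good with respect to iterates. For every positive strong submeasure $\hat\mu$ on $\Gamma_{f,\infty}$, $$f_*(\pi_1)_*(\hat\mu)\ge(\pi_1)_*(\sigma_f)_*(\hat\mu).$$
   Context: Positive strong submeasures on a compact metric space $W$: sub-linear, bounded, non-decreasing maps $C^0(W)\to\mathbb{R}$; $\mu\le\nu$ means pointwise inequality on $C^0$. For a continuous map $g:W\to W'$ between compact metric spaces, $g_*(\mu)(\varphi)=\mu(\varphi\circ g)$. A continuous open-dense defined map $f:X\dashrightarrow X$ is a continuous map $f:\mathrm{OpenDom}(f)\to X$ with $\mathrm{OpenDom}(f)$ open dense, $I(f)=X\setminus\mathrm{OpenDom}(f)$; its pushforward is $f_*(\mu)(\varphi)=\inf\{\mu(\psi):\psi\in C^0(X),\psi\ge E(\varphi\circ f)\}$, where $E(\varphi\circ f)=\varphi\circ f$ on $\mathrm{OpenDom}(f)$ and $E(\varphi\circ f)(x)=\limsup_{y\in\mathrm{OpenDom}(f),y\to x}\varphi(f(y))$ otherwise. $\Omega_{f,\infty}=\{x\in\mathrm{OpenDom}(f):f^n(x)\notin I(f)\ \forall n\}$; $f$ is good with respect to iterates if $\Omega_{f,\infty}$ is dense and $X\setminus\Omega_{f,\infty}$ is nowhere dense. $\Gamma_{f,\infty}$ is the closure in $X^{\mathbb{N}}$ (product topology) of $\{(x,f(x),f^2(x),\ldots):x\in\Omega_{f,\infty}\}$, $\sigma_f$ is the shift map on it and $\pi_1:\Gamma_{f,\infty}\to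 X$ the first coordinate projection. *)

From Stdlib Require Import Reals List Classical ClassicalEpsilon ClassicalDescription.
Open Scope R_scope.

Definition Rsup (S : R -> Prop) : R := epsilon (inhabits 0) (is_lub S).
Definition Rinf (S : R -> Prop) : R := - Rsup (fun r => S (- r)).

Section Metric.
Context {X : Type} (d : X -> X -> R).

Definition is_metric : Prop :=
  (forall x y, 0 <= d x y) /\ (forall x y, d x y = 0 <-> x = y) /\
  (forall x y, d x y = d y x) /\ (forall x y z, d x z <= d x y + d y z).

Definition m_open (U : X -> Prop) : Prop :=
  forall x, U x -> exists r, 0 < r /\ forall y, d x y < r -> U y.

Definition compact_metric : Prop :=
  forall (I : Type) (U : I -> X -> Prop),
    (forall i, m_open (U i)) -> (forall x, exists i, U i x) ->
    exists l : list I, forall x, exists i, In i l /\ U i x.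

Definition m_closure (S : X -> Prop) (x : X) : Prop :=
  forall eps, 0 < eps -> exists y, S y /\ d x y < eps.

Definition m_dense (S : X -> Prop) : Prop := forall x, m_closure S x.

Definition m_nowhere_dense (S : X -> Prop) : Prop :=
  forall U, m_open U -> (forall x, U x -> m_closure S x) -> forall x, ~ U x.

Definition contX (phi : X -> R) : Prop :=
  forall x eps, 0 < eps -> exists delta, 0 < delta /\
    forall y, d x y < delta -> Rabs (phi y - phi x) < eps.

Definition cont_on (Dom : X -> Prop) (f : X -> X) : Prop :=
  forall x, Dom x -> forall eps, 0 < eps -> exists delta, 0 < delta /\
    forall y, Dom y -> d x y < delta -> d (f x) (f y) < eps.

(* continuous open-dense defined map f : X --> X, with OpenDom(f) = Dom;
   the values of f outside Dom are irrelevant. *)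
Definition open_dense_map (Dom : X -> Prop) (f : X -> X) : Prop :=
  m_open Dom /\ m_dense Dom /\ cont_on Dom f.

Definition Omega_inf (Dom : X -> Prop) (f : X -> X) (x : X) : Prop :=
  Dom x /\ forall n : nat, Dom (Nat.iter n f x).

Definition good_wrt_iterates (Dom : X -> Prop) (f : X -> X) : Prop :=
  m_dense (Omega_inf Dom f) /\ m_nowhere_dense (fun x => ~ Omega_inf Dom f x).

(* Gamma_{f,infty}: m_closure in X^N (product topology) of the orbits of
   points of Omega_{f,infty}.  Basic neighbourhoods of z in the product
   topology are {w | d (z i) (w i) < eps for i <= N}. *)
Definition Gamma_inf (Dom : X -> Prop) (f : X -> X) (z : nat -> X) : Prop :=
  forall (N : nat) eps, 0 < eps -> exists x, Omega_inf Dom f x /\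
    forall i, (i <= N)%nat -> d (z i) (Nat.iter i f x) < eps.

Definition contGamma (Dom : X -> Prop) (f : X -> X) (Phi : (nat -> X) -> R) : Prop :=
  forall z, Gamma_inf Dom f z -> forall eps, 0 < eps ->
    exists (N : nat) delta, 0 < delta /\
      forall w, Gamma_inf Dom f w ->
        (forall i, (i <= N)%nat -> d (z i) (w i) < delta) ->
        Rabs (Phi w - Phi z) < eps.

Definition limsup_Dom (Dom : X -> Prop) (g : X -> R) (x : X) : R :=
  Rinf (fun s => exists delta, 0 < delta /\
          s = Rsup (fun v => exists y, Dom y /\ d x y < delta /\ v = g y)).

Definition Ext (Dom : X -> Prop) (f : X -> X) (phi : X -> R) (x : X) : R :=
  if excluded_middle_informative (Dom x) then phi (f x)
  else limsup_Dom Dom (fun y => phi (f y)) x.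

Definition push_odm (Dom : X -> Prop) (f : X -> X) (mu : (X -> R) -> R)
  (phi : X -> R) : R :=
  Rinf (fun r => exists psi, contX psi /\
          (forall x, Ext Dom f phi x <= psi x) /\ r = mu psi).
End Metric.

(* On a space W whose points are those t : T with P t, with C^0(W) given by
   the predicate C; mu is only relevant on C.  *)
Definition pos_strong_submeasure {T : Type} (P : T -> Prop)
  (C : (T -> R) -> Prop) (mu : (T -> R) -> R) : Prop :=
  (forall phi psi, C phi -> C psi ->
     mu (fun t => phi t + psi t) <= mu phi + mu psi) /\
  (forall (lam : R) phi, 0 <= lam -> C phi ->
     mu (fun t => lam * phi t) = lam * mu phi) /\
  (exists K, forall phi c, C phi -> (forall t, P t -> Rabs (phi t) <= c) ->
     Rabs (mu phi) <= K * c) /\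
  (forall phi psi, C phi -> C psi -> (forall t, P t -> phi t <= psi t) ->
     mu phi <= mu psi).

Definition push {T U : Type} (g : T -> U) (mu : (T -> R) -> R)
  (phi : U -> R) : R := mu (fun t => phi (g t)).

Definition pi1 {X : Type} (z : nat -> X) : X := z 0%nat.
Definition shift {X : Type} (z : nat -> X) : nat -> X := fun n => z (S n).

(* Let psi be continuous with psi >= E(phi o f).  On Omega_{f,oo} this says
   phi (f x) <= psi x, i.e. phi (z 1) <= psi (z 0) along every orbit z; both
   sides being continuous on X^N, the inequality passes to the closure
   Gamma_{f,oo}.  Monotonicity of mu then gives
   (pi1)_* (sigma_f)_* mu (phi) <= (pi1)_* mu (psi), and taking the infimum
   over psi yields the claim.  The infimum is over a nonempty set, since the
   constant sup |phi| dominates E(phi o f). *)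
From Stdlib Require Import Reals Lra Lia List ClassicalEpsilon ClassicalDescription.
Open Scope R_scope.

Lemma Rsup_is_lub (S : R -> Prop) :
  (exists x, S x) -> (exists b, forall x, S x -> x <= b) -> is_lub S (Rsup S).
Proof.
  intros [x Hx] [b Hb]. unfold Rsup. apply epsilon_spec.
  destruct (completeness S) as [m Hm]; [now exists b | now exists x | now exists m].
Qed.

Lemma Rinf_neg_is_lub (S : R -> Prop) (s b : R) :
  S s -> (forall x, S x -> b <= x) ->
  is_lub (fun r => S (- r)) (Rsup (fun r => S (- r))).
Proof.
  intros Hs Hb. apply Rsup_is_lub.
  - exists (- s). rewrite Ropp_involutive. exact Hs.
  - exists (- b). intros r Hr. specialize (Hb _ Hr). lra.
Qed.

Lemma le_Rinf (S : R -> Prop) (b : R) :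
  (exists x, S x) -> (forall x, S x -> b <= x) -> b <= Rinf S.
Proof.
  intros [s Hs] Hb. unfold Rinf.
  destruct (Rinf_neg_is_lub S s b Hs Hb) as [_ Hleast].
  enough (Rsup (fun r => S (- r)) <= - b) by lra.
  apply Hleast. intros r Hr. specialize (Hb _ Hr). lra.
Qed.

Lemma Rinf_le (S : R -> Prop) (s : R) :
  (exists b, forall x, S x -> b <= x) -> S s -> Rinf S <= s.
Proof.
  intros [b Hb] Hs. unfold Rinf.
  destruct (Rinf_neg_is_lub S s b Hs Hb) as [Hub _].
  enough (- s <= Rsup (fun r => S (- r))) by lra.
  apply Hub. rewrite Ropp_involutive. exact Hs.
Qed.

Section Metric.
Variables (X : Type) (d : X -> X -> R).

Lemma contX_const (c : R) : contX d (fun _ => c).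
Proof.
  intros x eps Heps. exists 1. split; [lra|].
  intros y _. rewrite Rminus_diag, Rabs_R0. exact Heps.
Qed.

Lemma contX_bounded (phi : X -> R) :
  compact_metric d -> contX d phi -> exists M, forall x, - M <= phi x <= M.
Proof.
  intros Hcompact Hphi.
  destruct (Hcompact nat (fun n x => Rabs (phi x) < INR n)) as [l Hl].
  - intros n x Hx.
    destruct (Hphi x (INR n - Rabs (phi x))) as [delta [Hdelta Hnear]]; [lra|].
    exists delta. split; [exact Hdelta|]. intros y Hy.
    specialize (Hnear y Hy). pose proof (Rabs_triang_inv (phi y) (phi x)). lra.
  - intros x. destruct (INR_unbounded (Rabs (phi x))) as [n Hn]. now exists n.
  - exists (INR (list_max l)). intros x.
    destruct (Hl x) as [i [Hi Hx]].
    assert (Hmax : (i <= list_max l)%nat).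
    { pose proof (proj1 (list_max_le l (list_max l)) (le_n _)) as Hall.
      rewrite Forall_forall in Hall. exact (Hall i Hi). }
    apply le_INR in Hmax. apply Rabs_def2 in Hx. lra.
Qed.

Lemma limsup_Dom_le (Dom : X -> Prop) (g : X -> R) (M : R) :
  m_dense d Dom -> (forall y, Dom y -> - M <= g y <= M) ->
  forall x, limsup_Dom d Dom g x <= M.
Proof.
  intros Hdense Hg x. unfold limsup_Dom.
  set (near delta v := exists y, Dom y /\ d x y < delta /\ v = g y).
  assert (Hlub : forall delta, 0 < delta -> is_lub (near delta) (Rsup (near delta))
                                      /\ exists y, Dom y /\ d x y < delta).
  { intros delta Hdelta. destruct (Hdense x delta Hdelta) as [y [Hy Hxy]].
    split; [|now exists y]. apply Rsup_is_lub.
    - exists (g y). now exists y.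
    - exists M. intros v (y' & Hy' & _ & ->). apply Hg, Hy'. }
  destruct (Hlub 1 ltac:(lra)) as [[_ Hleast] _].
  apply Rle_trans with (Rsup (near 1)).
  - apply Rinf_le; [|exists 1; split; [lra | reflexivity]].
    exists (- M). intros s (delta & Hdelta & ->).
    destruct (Hlub delta Hdelta) as [[Hub _] [y [Hy Hxy]]].
    apply Rle_trans with (g y); [apply Hg, Hy|].
    apply Hub. now exists y.
  - apply Hleast. intros v (y & Hy & _ & ->). apply Hg, Hy.
Qed.

Lemma Ext_Dom (Dom : X -> Prop) (f : X -> X) (phi : X -> R) (x : X) :
  Dom x -> Ext d Dom f phi x = phi (f x).
Proof.
  intros Hx. unfold Ext.
  destruct (excluded_middle_informative (Dom x)); [reflexivity | contradiction].
Qed.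

Lemma Ext_le (Dom : X -> Prop) (f : X -> X) (phi : X -> R) (M : R) :
  m_dense d Dom -> (forall x, - M <= phi x <= M) ->
  forall x, Ext d Dom f phi x <= M.
Proof.
  intros Hdense Hphi x. unfold Ext.
  destruct (excluded_middle_informative (Dom x)).
  - apply Hphi.
  - apply limsup_Dom_le; [exact Hdense | intros y _; apply Hphi].
Qed.

Lemma contGamma_coord (Dom : X -> Prop) (f : X -> X) (phi : X -> R) (k : nat) :
  contX d phi -> contGamma d Dom f (fun z => phi (z k)).
Proof.
  intros Hphi z _ eps Heps. destruct (Hphi (z k) eps Heps) as [delta [Hdelta Hnear]].
  exists k, delta. split; [exact Hdelta|].
  intros w _ Hw. apply Hnear, Hw. lia.
Qed.

Lemma Gamma_inf_orbit_le (Dom : X -> Prop) (f : X -> X) (phi psi : X -> R) :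
  contX d phi -> contX d psi ->
  (forall x, Omega_inf Dom f x -> phi (f x) <= psi x) ->
  forall z, Gamma_inf d Dom f z -> phi (z 1%nat) <= psi (z 0%nat).
Proof.
  intros Hphi Hpsi Horbit z Hz. apply Rle_plus_epsilon. intros eps Heps.
  destruct (Hpsi (z 0%nat) (eps / 2)) as [d0 [Hd0 Hpsi_near]]; [lra|].
  destruct (Hphi (z 1%nat) (eps / 2)) as [d1 [Hd1 Hphi_near]]; [lra|].
  destruct (Hz 1%nat (Rmin d0 d1) (Rmin_pos _ _ Hd0 Hd1)) as [x [Hx Hxz]].
  pose proof (Rmin_l d0 d1). pose proof (Rmin_r d0 d1).
  specialize (Hxz 0%nat ltac:(lia)) as Hz0. specialize (Hxz 1%nat ltac:(lia)) as Hz1.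
  simpl in Hz0, Hz1.
  pose proof (Rabs_def2 _ _ (Hpsi_near x ltac:(lra))).
  pose proof (Rabs_def2 _ _ (Hphi_near (f x) ltac:(lra))).
  specialize (Horbit x Hx). lra.
Qed.

End Metric.

Theorem proposition3p1 (X : Type) (d : X -> X -> R)
  (Hmetric : is_metric d) (Hcompact : compact_metric d)
  (Dom : X -> Prop) (f : X -> X)
  (Hf : open_dense_map d Dom f) (Hgood : good_wrt_iterates d Dom f)
  (mu : ((nat -> X) -> R) -> R)
  (Hmu : pos_strong_submeasure (Gamma_inf d Dom f) (contGamma d Dom f) mu) :
  forall phi : X -> R, contX d phi ->
    push (@pi1 X) (push (@shift X) mu) phi
      <= push_odm d Dom f (push (@pi1 X) mu) phi.
Proof.
  intros phi Hphi. unfold push, push_odm, pi1, shift.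
  destruct Hmu as (_ & _ & _ & Hmono). destruct Hf as (_ & Hdense & _).
  destruct (contX_bounded X d phi Hcompact Hphi) as [M HM].
  apply le_Rinf.
  - exists (mu (fun _ => M)), (fun _ => M).
    split; [apply contX_const | split; [apply Ext_le; assumption | reflexivity]].
  - intros r (psi & Hpsi & Hdom & ->).
    apply Hmono; [apply contGamma_coord; assumption .. |].
    apply Gamma_inf_orbit_le; [assumption .. |].
    intros x [Hx _]. rewrite <- (Ext_Dom X d Dom f phi x Hx). apply Hdom.
Qed.
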